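(* Let $k$ be a positive integer and let $L$ be a link with $\det L\neq 0$ admitting non-trivial $(2k+1)$-colorings. If $S\subseteq\{0,1,2,\dots,k\}\subseteq \mathbf{Z}/(2k+1)\mathbf{Z}$, then $S$ is not a $(2k+1)$-sufficient set of colors for $L$.
   Context: For a positive integer $n$, an $n$-coloring of a link diagram is an assignment of an element of $\mathbf{Z}/n\mathbf{Z}$ to each arc such that at every crossing, with over-arc color $b$ and under-arc colors $a,c$, $2b-a-c\equiv 0\pmod n$; it is non-trivial if at least two distinct colors are used. An $n$-sufficient set of colors for $L$ is a set of residues mod $n$ such that some diagram of $L$ admits a non-trivial $n$-coloring using only colors from this set. $\det L$ denotes the determinant of the link $L$. *)

From HB Require Import structures.
From mathcomp Require Import all_boot all_order all_algebra.
Set Implicit Arguments. Unset Strict Implicit. Unset Printing Implicit Defensive.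
Import Order.TTheory GRing.Theory Num.Theory.
Local Open Scope ring_scope.

(* Combinatorial data of a link diagram with n.+1 crossings and n.+1 arcs
   (arcs and crossings both indexed by 'I_n.+1).  Crossing x has over-arc
   [dover x] and under-arcs [dunder1 x], [dunder2 x]. *)
Record diagram := Diagram {
  dn : nat;
  dover : 'I_dn.+1 -> 'I_dn.+1;
  dunder1 : 'I_dn.+1 -> 'I_dn.+1;
  dunder2 : 'I_dn.+1 -> 'I_dn.+1 }.

(* An n-coloring (n >= 2, so 'Z_n is Z/nZ): 2b - a - c = 0 at every crossing. *)
Definition is_coloring (n : nat) (D : diagram) (col : 'I_(dn D).+1 -> 'Z_n) :=
  forall x : 'I_(dn D).+1,
    2%:R * col (dover x) - col (dunder1 x) - col (dunder2 x) = 0.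

Definition nontrivial_coloring (n : nat) (D : diagram)
    (col : 'I_(dn D).+1 -> 'Z_n) :=
  is_coloring col /\ exists a b, col a <> col b.

Definition coloring_matrix (D : diagram) : 'M[int]_((dn D).+1) :=
  \matrix_(i, j) ((2 * (j == dover i)%:Z) - (j == dunder1 i)%:Z
                   - (j == dunder2 i)%:Z).

Definition diagram_det (D : diagram) : nat :=
  `|\det (row' ord0 (col' ord0 (coloring_matrix D)))|%N.

(* S is an n-sufficient set of colors for the link whose diagrams are [Diags]. *)
Definition sufficient_set (n : nat) (Diags : diagram -> Prop) (S : {set 'Z_n}) :=
  exists D : diagram, Diags D /\
    exists col : 'I_(dn D).+1 -> 'Z_n,
      nontrivial_coloring col /\ forall x, col x \in S.

From mathcomp Require Import all_boot all_order all_algebra.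
From mathcomp Require Import zify.
Set Implicit Arguments. Unset Strict Implicit. Unset Printing Implicit Defensive.
Import GRing.Theory.
Local Open Scope ring_scope.

(* Colors in {0, ..., k} never wrap around modulo 2k+1, so a (2k+1)-coloring
   with such colors is an honest integer coloring: the column of colors lies
   in the kernel of the coloring matrix.  A non-constant kernel vector,
   shifted to vanish on arc 0, is a non-zero kernel vector of the first minor,
   whose determinant is therefore 0. *)

Lemma Zp_nat_inj_small (n a b : nat) : (a < n)%N -> (b < n)%N ->
  a%:R = b%:R :> 'Z_n -> a = b.
Proof.
move=> a_lt b_lt; have [n_le1|n_gt1] := leqP n 1; first lia.
move/(congr1 (@nat_of_ord _)).
by rewrite !(val_Zp_nat n_gt1) !modn_small.
Qed.

Lemma Zp_midpoint (k : nat) (x y z : 'Z_(2 * k + 1)) :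
  (val x <= k)%N -> (val y <= k)%N -> (val z <= k)%N ->
  2%:R * y - x - z = 0 -> (2 * val y = val x + val z)%N.
Proof.
move=> xk yk zk /eqP; rewrite -addrA -opprD subr_eq0 => /eqP yxz.
apply: (@Zp_nat_inj_small (2 * k + 1)); try lia.
by rewrite natrM natrD !natr_Zp.
Qed.

Lemma scale_det_eq0_of_mulmx_eq0 (R : comUnitRingType) (n : nat) (A : 'M[R]_n)
    (w : 'cV[R]_n) :
  A *m w = 0 -> \det A *: w = 0.
Proof. by move=> Aw0; rewrite -mul_scalar_mx -mul_adj_mx -mulmxA Aw0 mulmx0. Qed.

Lemma det_minor_eq0 (R : idomainType) (n : nat) (M : 'M[R]_n.+1)
    (v : 'cV[R]_n.+1) :
  (forall i, \sum_j M i j = 0) -> M *m v = 0 -> (exists j, v j 0 != v ord0 0) ->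
  \det (row' ord0 (col' ord0 M)) = 0.
Proof.
move=> Msum0 Mv0 [j vj_neq].
set u := v - const_mx (v ord0 0).
have Mconst0 : M *m (const_mx (v ord0 0) : 'cV_n.+1) = 0.
  apply/matrixP=> i l; rewrite !mxE; under eq_bigr do rewrite mxE.
  by rewrite -mulr_suml Msum0 mul0r.
have Mu0 : M *m u = 0 by rewrite mulmxBr Mv0 Mconst0 subr0.
have minor_u0 : row' ord0 (col' ord0 M) *m row' ord0 u = 0.
  apply/matrixP=> i l; rewrite [l]ord1.
  have := congr1 (fun A : 'cV[R]_n.+1 => A (lift ord0 i) 0) Mu0.
  rewrite !mxE big_ord_recl !mxE subrr mulr0 add0r.
  by apply: etrans; apply: eq_bigr => m _; rewrite !mxE.
case: (unliftP ord0 j) vj_neq => [j' ->|->]; last by rewrite eqxx.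
move=> vj'_neq; move: (scale_det_eq0_of_mulmx_eq0 minor_u0).
move/matrixP/(_ j' 0); rewrite !mxE => /eqP; rewrite mulf_eq0 subr_eq0.
by rewrite (negbTE vj'_neq) orbF => /eqP.
Qed.

Lemma sum_indicator_mul (n : nat) (a : 'I_n) (u : 'I_n -> int) :
  \sum_j (j == a)%:Z * u j = u a.
Proof.
rewrite (bigD1 a) //= eqxx mul1r big1 ?addr0 // => j /negbTE ->.
by rewrite mul0r.
Qed.

Lemma coloring_matrix_row_mul (D : diagram) (v : 'I_(dn D).+1 -> int) i :
  \sum_j coloring_matrix D i j * v j =
    2 * v (dover i) - v (dunder1 i) - v (dunder2 i).
Proof.
under eq_bigr do rewrite mxE !mulrBl -mulrA.
by rewrite !sumrB -mulr_sumr !sum_indicator_mul.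
Qed.

Lemma coloring_matrix_row_sum (D : diagram) i : \sum_j coloring_matrix D i j = 0.
Proof.
have := coloring_matrix_row_mul (fun=> 1) i.
by under eq_bigr do rewrite mulr1; move=> ->.
Qed.

Lemma small_coloring_in_kernel (k : nat) (D : diagram)
    (col : 'I_(dn D).+1 -> 'Z_(2 * k + 1)) :
  is_coloring col -> (forall x, val (col x) <= k)%N ->
  coloring_matrix D *m (\col_j (val (col j))%:Z) = 0.
Proof.
move=> col_ok col_small; apply/matrixP=> i l; rewrite [l]ord1.
rewrite !mxE; under eq_bigr do rewrite [X in _ * X]mxE.
rewrite coloring_matrix_row_mul.
have := Zp_midpoint (col_small _) (col_small _) (col_small _) (col_ok i).
lia.
Qed.

Lemma diagram_det_eq0_of_small_coloring (k : nat) (D : diagram)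
    (col : 'I_(dn D).+1 -> 'Z_(2 * k + 1)) :
  nontrivial_coloring col -> (forall x, val (col x) <= k)%N ->
  diagram_det D = 0%N.
Proof.
move=> [col_ok [a [b col_ab]]] col_small.
rewrite /diagram_det (det_minor_eq0 (@coloring_matrix_row_sum D)
  (small_coloring_in_kernel col_ok col_small)) //.
have [ea|nea] := eqVneq (col a) (col ord0).
- exists b; rewrite !mxE; apply/eqP => -[/val_inj eb].
  by apply: col_ab; rewrite ea eb.
- by exists a; rewrite !mxE; apply: contra nea => /eqP [/val_inj ->].
Qed.

Theorem theorem4p1 (k : nat) (Diags : diagram -> Prop) (detL : nat)
  (S : {set 'Z_(2 * k + 1)}) :
  (0 < k)%N ->
  (exists D, Diags D) ->
  (forall D, Diags D -> diagram_det D = detL) ->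
  detL <> 0%N ->
  (exists D, Diags D /\ exists col : 'I_(dn D).+1 -> 'Z_(2 * k + 1),
                          nontrivial_coloring col) ->
  S \subset [set x : 'Z_(2 * k + 1) | (val x <= k)%N] ->
  ~ sufficient_set Diags S.
Proof.
move=> _ _ det_const detL_neq0 _ S_small [D [DL [col [col_nontriv col_in_S]]]].
apply: detL_neq0; rewrite -(det_const D DL).
apply: (diagram_det_eq0_of_small_coloring col_nontriv) => x.
by have := subsetP S_small _ (col_in_S x); rewrite inE.
Qed.
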